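(* Let $m_0,\dots,m_{k-1}$ be models and let $D$ be a set of i.i.d. games between them, each game being labelled as belonging to a given task or not; let $D_{\text{task}}\subset D$ be the games belonging to the task and $D_{\neg\text{task}}\subset D$ those not belonging to it. Let $\mathbf{R}_{\text{task}}$, resp. $\mathbf{R}_{\neg\text{task}}$, be the rating vector obtained by fitting the games in $D_{\text{task}}$, resp. $D_{\neg\text{task}}$, with the optimal univariate rating system, i.e. a minimizer over $\mathbb{R}^k$ of the logistic loss $\mathcal{L}(D_{\text{task}},\cdot)$, resp. $\mathcal{L}(D_{\neg\text{task}},\cdot)$. Let $\mathbf{R}'$ be the Polyrating fit on all of $D$ with parameters $R'^{m}_{\neg\text{task}}$ and $\beta^m_1$ for each model $m$, using the formula $R'^m(g)=R'^m_{\neg\text{task}}+\beta^m_1\,[g\in D_{\text{task}}]$ and independent priors $\mathcal{N}(0,\sigma_{\neg\text{task}}^2)$ on each $R'^m_{\neg\text{task}}$ and $\mathcal{N}(0,\sigma_1^2)$ on each $\beta^m_1$; that is, $\mathbf{R}'$ minimizes $$\mathcal{L}(D_{\neg\text{task}},\mathbf{R}'_{\neg\text{task}})+\mathcal{L}(D_{\text{task}},\mathbf{R}'_{\text{task}})+\sum_{m}\frac{(R'^m_{\neg\text{task}})^2}{2\sigma_{\neg\text{task}}^2}+\sum_m\frac{(\beta^m_1)^2}{2\sigma_1^2},$$ where $R'^m_{\text{task}}:=R'^m_{\neg\text{task}}+\beta^m_1$. Then, as $|D_{\neg\text{task}}|\to\infty$ and $|D_{\text{task}}|\to\infty$, $\mathbf{R}_{\text{task}}$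 and $\mathbf{R}'_{\text{task}}$ converge, up to a constant difference, to the same optimal rating $\mathbf{R}^*_{\text{task}}$, provided all optimal ratings are finite. Similarly, $\mathbf{R}_{\neg\text{task}}$ and $\mathbf{R}'_{\neg\text{task}}$ converge, up to a constant difference, to the same optimal rating $\mathbf{R}^*_{\neg\text{task}}$, provided all optimal ratings are finite.
   Context: A game $g$ consists of two distinct models $g_{m_a},g_{m_b}$ and a result $g_r\in\{0,\tfrac12,1\}$ ($1$ if $g_{m_a}$ wins, $0$ if it loses, $\tfrac12$ for a draw). For a set $S$ of games and a rating vector $\mathbf{R}\in\mathbb{R}^k$, the logistic loss is $\mathcal{L}(S,\mathbf{R})=\sum_{g\in S}\big[-g_r\log\operatorname{sig}(\tfrac{R^{g_{m_a}}-R^{g_{m_b}}}{400})-(1-g_r)\log(1-\operatorname{sig}(\tfrac{R^{g_{m_a}}-R^{g_{m_b}}}{400}))\big]$ with $\operatorname{sig}(x)=1/(1+e^{-x})$. The optimal rating $\mathbf{R}^*_{\text{task}}$ (resp. $\mathbf{R}^*_{\neg\text{task}}$) is the minimizer of the expected logistic loss $\mathbf{R}\mapsto\mathbb{E}_g[\mathcal{L}(\{g\},\mathbf{R})]$ where $g$ is drawn from the distribution of games belonging (resp. not belonging) to the task. Ratings are only determined up to an additive constant, since adding a constant to all entries of $\mathbf{R}$ leaves $\mathcal{L}$ unchanged. *)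

From HB Require Import structures.
From mathcomp Require Import all_boot all_order all_algebra.
From mathcomp Require Import all_classical all_reals all_analysis.

Set Implicit Arguments.
Unset Strict Implicit.
Unset Printing Implicit Defensive.

Import Order.TTheory GRing.Theory Num.Theory.
Import numFieldNormedType.Exports.
Local Open Scope classical_set_scope.
Local Open Scope ring_scope.

(* A game between models 'I_k: (m_a, m_b, result code) with m_a <> m_b.
   Result code i : 'I_3 encodes g_r = i/2, i.e. 0 (loss of m_a), 1/2 (draw), 1 (win of m_a). *)
Definition game (k : nat) := {g : 'I_k * 'I_k * 'I_3 | g.1.1 != g.1.2}.

Definition gma k (g : game k) : 'I_k := (val g).1.1.
Definition gmb k (g : game k) : 'I_k := (val g).1.2.
Definition gres {R : realType} k (g : game k) : R := ((val g).2 : nat)%:R / 2.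

Definition sigmoid {R : realType} (x : R) : R := 1 / (1 + expR (- x)).

Definition rating (R : realType) (k : nat) := 'I_k -> R.

Definition game_loss {R : realType} k (g : game k) (Rt : rating R k) : R :=
  let d := (Rt (gma g) - Rt (gmb g)) / 400 in
  - gres g * ln (sigmoid d) - (1 - gres g) * ln (1 - sigmoid d).

Definition loss {R : realType} k (S : seq (game k)) (Rt : rating R k) : R :=
  \sum_(g <- S) game_loss g Rt.

Definition is_minimizer {R : realType} {T : Type} (f : T -> R) (x : T) : Prop :=
  forall y, f x <= f y.

(* Sequence X of random labelled games (label true = belongs to the task) is i.i.d.
   with common law p: the joint law of (X_0,...,X_{n-1}) is the product of p. *)
Definition iid_seq {d} {Omega : measurableType d} {R : realType} {V : finType}
  (P : probability Omega R) (X : nat -> Omega -> V) (p : V -> R) : Prop :=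
  (forall i v, measurable (X i @^-1` [set v])) /\
  (forall (n : nat) (v : 'I_n -> V),
      P (\bigcap_(i in [set j : 'I_n | True]) (X i @^-1` [set v i])) =
      (\prod_(i < n) p (v i))%:E).

Definition D_task {Omega : Type} k (X : nat -> Omega -> game k * bool) (n : nat) (w : Omega)
  : seq (game k) := [seq (X i w).1 | i <- iota 0 n & (X i w).2].
Definition D_ntask {Omega : Type} k (X : nat -> Omega -> game k * bool) (n : nat) (w : Omega)
  : seq (game k) := [seq (X i w).1 | i <- iota 0 n & ~~ (X i w).2].

Definition exp_loss {R : realType} k (p : game k * bool -> R) (b : bool) (Rt : rating R k) : R :=
  \sum_(g : game k) (p (g, b) / (\sum_(h : game k) p (h, b))) * game_loss g Rt.

Definition polyrating_obj {R : realType} k (sn s1 : R) (Dn Dt : seq (game k))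
  (x : rating R k * rating R k) : R :=
  loss Dn x.1 + loss Dt (fun m => x.1 m + x.2 m)
  + \sum_(m < k) (x.1 m) ^+ 2 / (2 * sn ^+ 2)
  + \sum_(m < k) (x.2 m) ^+ 2 / (2 * s1 ^+ 2).

Definition cvg_up_to_const {R : realType} k (u : nat -> rating R k) (v : rating R k) : Prop :=
  exists c : nat -> R, forall m : 'I_k, (fun n => u n m + c n) @ \oo --> (v m : R).

Definition optimal_up_to_const {R : realType} k (f : rating R k -> R) (v : rating R k) : Prop :=
  forall w, is_minimizer f w <-> exists c : R, forall m, w m = v m + c.

From HB Require Import structures.
From mathcomp Require Import all_boot all_order all_algebra.
From mathcomp Require Import all_classical all_reals all_analysis.
From mathcomp Require Import ring lra.
Import Order.TTheory GRing.Theory Num.Theory.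
Import numFieldNormedType.Exports.
Local Open Scope classical_set_scope.
Local Open Scope ring_scope.

(* After division by the number of games, every objective is a weighted sum of
   per-game logistic losses whose weights are the empirical frequencies of the
   labelled games.  By the strong law of large numbers (for a finitely-valued
   i.i.d. sequence it follows from a Chernoff bound and Borel-Cantelli) these
   weights converge almost surely to the true probabilities, and the limiting
   weighted loss is a positive multiple of the expected loss.  Each per-game loss
   is convex and invariant under adding a constant to all ratings, and the
   expected loss has a minimizer that is unique up to such constants.  After
   pinning one coordinate, compactness gives the expected loss a fixed margin
   above its minimum on the sphere of radius r around the optimum, uniform
   convergence on that sphere transfers the margin to the empirical losses, and
   convexity extends it to everything outside the sphere: near-minimizers of the
   empirical losses therefore converge up to a constant.  For Polyrating the
   Gaussian priors only contribute O(1), i.e. O(1/n) after normalization, and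
   comparing the fit with the point (R*_ntask, R*_task - R*_ntask) shows that
   both of its components are near-minimizers of their empirical losses. *)

Section logistic_loss.
Context {R : realType}.
Implicit Types (a b r t x : R).

Lemma expR_convex a b t : 0 <= t -> t <= 1 ->
  expR ((1 - t) * a + t * b) <= (1 - t) * expR a + t * expR b.
Proof.
move=> t0 t1; rewrite addrC [leRHS]addrC.
exact: (convex_expR (Itv01 t0 t1) b a).
Qed.

Definition softplus x : R := ln (1 + expR x).

Lemma softplus_arg_gt0 x : 0 < 1 + expR x.
Proof. by rewrite ltr_wpDr ?expR_ge0. Qed.

Lemma softplus_gt0 x : 0 < softplus x.
Proof. by rewrite ln_gt0 // ltrDl expR_gt0. Qed.

Lemma expR_softplus x : expR (softplus x) = 1 + expR x.
Proof. by rewrite lnK // posrE softplus_arg_gt0. Qed.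

Lemma softplus_convex a b t : 0 <= t -> t <= 1 ->
  softplus ((1 - t) * a + t * b) <= (1 - t) * softplus a + t * softplus b.
Proof.
move=> t0 t1; set m := (1 - t) * a + t * b.
set M := (1 - t) * softplus a + t * softplus b.
rewrite -ler_expR expR_softplus.
(* [1 + expR m <= expR M] reads [expR (- M) + expR (m - M) <= 1]: bound both
   terms by convexity of expR, and the two bounds add up to 1. *)
have le1 : expR (- M) + expR (m - M) <= 1.
  have h1 := expR_convex (- softplus a) (- softplus b) t t0 t1.
  have h2 := expR_convex (a - softplus a) (b - softplus b) t t0 t1.
  rewrite (_ : _ * - _ + _ = - M) in h1; last by rewrite /M; ring.
  rewrite (_ : _ * (_ - _) + _ = m - M) in h2; last by rewrite /m /M; ring.
  apply: le_trans (lerD h1 h2) _; rewrite !expRD !expRN !expR_softplus.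
  have pa := softplus_arg_gt0 a; have pb := softplus_arg_gt0 b.
  by rewrite le_eqVlt; apply/predU1P; left; field; rewrite ?gt_eqF.
have := ler_wpM2l (expR_ge0 M) le1; rewrite mulr1 mulrDr -!expRD.
by rewrite subrr expR0 addrCA subrr addr0 addrC.
Qed.

Lemma softplus_continuous : continuous softplus.
Proof.
move=> x; apply: continuous_comp; last exact/continuous_ln/softplus_arg_gt0.
by apply: continuousD; [exact: cst_continuous | exact: continuous_expR].
Qed.

Definition logistic_loss r x := r * softplus (- x) + (1 - r) * softplus x.

Variable r : R.
Hypotheses (r0 : 0 <= r) (r1 : r <= 1).

Lemma logistic_loss_ge0 x : 0 <= logistic_loss r x.
Proof.
by rewrite addr_ge0 // mulr_ge0 ?subr_ge0 // ltW // softplus_gt0.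
Qed.

Lemma logistic_loss_convex a b t : 0 <= t -> t <= 1 ->
  logistic_loss r ((1 - t) * a + t * b) <=
  (1 - t) * logistic_loss r a + t * logistic_loss r b.
Proof.
move=> t0 t1; rewrite /logistic_loss.
have hN := softplus_convex (- a) (- b) t t0 t1.
have hP := softplus_convex a b t t0 t1.
rewrite (_ : - _ = (1 - t) * - a + t * - b); last by ring.
have r1' : 0 <= 1 - r by rewrite subr_ge0.
have := lerD (ler_wpM2l r0 hN) (ler_wpM2l r1' hP).
by move/le_trans; apply; rewrite le_eqVlt; apply/predU1P; left; ring.
Qed.

Lemma logistic_loss_continuous : continuous (logistic_loss r).
Proof.
move=> x; apply: (continuousD (f := fun x => r * softplus (- x))
                              (g := fun x => (1 - r) * softplus x)).
  apply: continuousM; first exact: cst_continuous.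
  by apply: continuous_comp; [exact: continuousN | exact: softplus_continuous].
by apply: continuousM; [exact: cst_continuous | exact: softplus_continuous].
Qed.

End logistic_loss.

Section game_loss.
Context {R : realType} {k : nat}.
Implicit Types (g : game k) (x y : rating R k).

Definition row_rating (u : 'rV[R]_k) : rating R k := fun m => u ord0 m.

Lemma row_ratingK x : row_rating (\row_m x m) = x.
Proof. by apply/funext => m; rewrite /row_rating mxE. Qed.

Definition rating_gap g x : R := (x (gma g) - x (gmb g)) / 400.

Lemma game_loss_logistic g x : game_loss g x = logistic_loss (gres g) (rating_gap g x).
Proof.
rewrite /game_loss /logistic_loss /sigmoid -/(rating_gap g x) !mul1r.
set d := rating_gap g x.
have e : 1 - (1 + expR (- d))^-1 = (1 + expR d)^-1.
  have := expR_gt0 d; rewrite expRN => ed.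
  by field; rewrite ?gt_eqF // ?invr_gt0 // ltr_wpDr // ?ltW // invr_gt0.
rewrite e !lnV ?posrE ?softplus_arg_gt0 // /softplus; ring.
Qed.

Lemma gres_ge0 g : 0 <= gres g :> R.
Proof. by rewrite /gres divr_ge0. Qed.

Lemma gres_le1 g : gres g <= 1 :> R.
Proof.
rewrite /gres ler_pdivrMr // mul1r ler_nat.
by have := ltn_ord (val g).2; case: ((val g).2 : nat) => [|[|[|]]].
Qed.

Lemma game_loss_ge0 g x : 0 <= game_loss g x.
Proof. by rewrite game_loss_logistic logistic_loss_ge0 ?gres_ge0 ?gres_le1. Qed.

Lemma game_loss_shift g x c : game_loss g (fun m => x m + c) = game_loss g x.
Proof. by rewrite !game_loss_logistic /rating_gap opprD addrACA subrr addr0. Qed.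

Lemma game_loss_convex g x y t : 0 <= t -> t <= 1 ->
  game_loss g (fun m => (1 - t) * x m + t * y m) <=
  (1 - t) * game_loss g x + t * game_loss g y.
Proof.
move=> t0 t1; rewrite !game_loss_logistic.
rewrite (_ : rating_gap g _ = (1 - t) * rating_gap g x + t * rating_gap g y).
  exact: logistic_loss_convex _ (gres_ge0 g) (gres_le1 g) _ _ _ t0 t1.
by rewrite /rating_gap; field.
Qed.

Lemma game_loss_continuous g : continuous (fun u => game_loss g (row_rating u)).
Proof.
rewrite (_ : (fun u => _) =
  logistic_loss (gres g) \o (fun u => rating_gap g (row_rating u))); last first.
  by apply/funext => u; rewrite /= game_loss_logistic.
move=> u; apply: continuous_comp; last exact: logistic_loss_continuous.
apply: (continuousM (s := fun v : 'rV[R]_k => row_rating v (gma g) - row_rating v (gmb g))).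
  by apply: continuousB; exact: coord_continuous.
exact: cst_continuous.
Qed.

End game_loss.

Section weighted_loss.
Context {R : realType} {k : nat} {G : finType}.
Variable f : G -> rating R k -> R.
Hypothesis f_ge0 : forall g x, 0 <= f g x.
Hypothesis f_shift : forall g x c, f g (fun m => x m + c) = f g x.
Hypothesis f_convex : forall g x y t, 0 <= t -> t <= 1 ->
  f g (fun m => (1 - t) * x m + t * y m) <= (1 - t) * f g x + t * f g y.
Hypothesis f_continuous : forall g, continuous (fun u => f g (row_rating u)).

Definition weighted_loss (c : G -> R) (x : rating R k) : R := \sum_g c g * f g x.

Lemma weighted_loss_shift c x a :
  weighted_loss c (fun m => x m + a) = weighted_loss c x.
Proof. by apply: eq_bigr => g _; rewrite f_shift. Qed.

Lemma weighted_loss_convex c x y t : (forall g, 0 <= c g) -> 0 <= t -> t <= 1 ->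
  weighted_loss c (fun m => (1 - t) * x m + t * y m) <=
  (1 - t) * weighted_loss c x + t * weighted_loss c y.
Proof.
move=> c0 t0 t1; rewrite /weighted_loss !mulr_sumr -big_split /=.
by apply: ler_sum => g _; rewrite mulrCA (mulrCA t) -mulrDr ler_wpM2l ?f_convex.
Qed.

Lemma weighted_loss_continuous c : continuous (fun u => weighted_loss c (row_rating u)).
Proof.
apply: continuous_big; first exact: add_continuous.
by move=> g _ u; apply: continuousM; [exact: cst_continuous | exact: f_continuous].
Qed.

Variables (w : G -> R) (v : rating R k) (m0 : 'I_k).
Hypothesis v_opt : optimal_up_to_const (weighted_loss w) v.

Local Notation Fw := (weighted_loss w).

Lemma opt_le y : Fw v <= Fw y.
Proof. by have -> // := proj2 (v_opt v); exists 0 => m; rewrite addr0. Qed.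

Definition sup_ball r y := forall m, `|y m - v m| <= r.

Definition row_sup_ball r :=
  [set u : 'rV[R]_k | forall i, `[v i - r, v i + r]%classic (u ord0 i)].

Lemma row_sup_ballE r u : row_sup_ball r u <-> sup_ball r (row_rating u).
Proof.
rewrite /row_sup_ball /sup_ball /row_rating /=.
split=> h i; have := h i.
  by rewrite in_itv /= ler_norml => /andP[? ?]; apply/andP; split; lra.
by rewrite in_itv /= ler_norml => /andP[? ?]; apply/andP; split; lra.
Qed.

Lemma row_sup_ball_compact r : compact (row_sup_ball r).
Proof. exact: (@rV_compact R k _ (fun i => @segment_compact R _ _)). Qed.

Definition pinned_sphere r := row_sup_ball r `&` ([set u | u ord0 m0 = v m0] `&`
  \bigcup_(i in setT) [set u | r <= `|u ord0 i - v i|]).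

Lemma pinned_sphere_row r z i : z m0 = v m0 -> sup_ball r z -> r <= `|z i - v i| ->
  pinned_sphere r (\row_m z m).
Proof.
move=> zm0 zb zi; split; first by apply/row_sup_ballE; rewrite row_ratingK.
by rewrite /= !mxE; split=> //; exists i => //=; rewrite mxE.
Qed.

Lemma pinned_sphere_compact r : compact (pinned_sphere r).
Proof.
apply: compact_closedI; first exact: row_sup_ball_compact.
apply: closedI.
  apply: (@preimage_closed _ _ (fun u : 'rV[R]_k => u ord0 m0) [set x | x = v m0]).
    by move=> ? _; exact: coord_continuous.
  exact: closed_eq.
apply: closed_bigcup => [|i _]; first exact: finite_finset.
apply: (@preimage_closed _ _ (fun u : 'rV[R]_k => `|u ord0 i - v i|) [set x | r <= x]).
  move=> ? _; apply: (continuous_comp (f := fun u : 'rV[R]_k => u ord0 i - v i)).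
    2: exact: norm_continuous.
  by apply: continuousB; [exact: coord_continuous | exact: cst_continuous].
exact: closed_ge.
Qed.

Lemma opt_sphere_margin r : 0 < r -> exists2 d, 0 < d & forall z, z m0 = v m0 ->
  sup_ball r z -> (exists i, r <= `|z i - v i|) -> Fw v + d <= Fw z.
Proof.
move=> r0; have [[u Su]|S0] := pselect (pinned_sphere r !=set0); last first.
  exists 1 => // z zm0 zb [i zi]; exfalso.
  by apply: S0; exists (\row_m z m); exact: pinned_sphere_row zi.
have FwS : {within pinned_sphere r, continuous (fun u => Fw (row_rating u))}.
  by apply: continuous_subspaceT; exact: weighted_loss_continuous.
have [c /set_mem [_ [cm0 [i _ ci]]] cmin] :=
  compact_EVT_min (ex_intro _ u Su) (pinned_sphere_compact r) FwS.
exists (Fw (row_rating c) - Fw v); last first.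
  move=> z zm0 zb [j zj]; rewrite addrC subrK -(row_ratingK z).
  by apply: cmin; rewrite inE; exact: pinned_sphere_row zj.
rewrite subr_gt0 lt_def opt_le andbT; apply/negP => /eqP e.
have [a ca] : exists a, forall m, row_rating c m = v m + a.
  by apply/v_opt => y; rewrite e opt_le.
have a0 : a = 0 by apply: (addrI (v m0)); rewrite addr0 -ca; exact: cm0.
have : r <= `|row_rating c i - v i| := ci.
by rewrite ca a0 addr0 subrr normr0 leNgt r0.
Qed.

Lemma vball_loss_bounded r : 0 <= r ->
  exists M, forall y, sup_ball r y -> weighted_loss (fun=> 1) y <= M.
Proof.
move=> r0; have ne : row_sup_ball r !=set0.
  exists (\row_m v m); apply/row_sup_ballE; rewrite row_ratingK => m.
  by rewrite subrr normr0.
have [c _ cmax] := compact_EVT_max ne (row_sup_ball_compact r)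
  (continuous_subspaceT (weighted_loss_continuous (fun=> 1))).
exists (weighted_loss (fun=> 1) (row_rating c)) => y yb; rewrite -(row_ratingK y).
by apply: cmax; rewrite inE; apply/row_sup_ballE; rewrite row_ratingK.
Qed.

Definition pin y : rating R k := fun m => y m + (v m0 - y m0).

Lemma pin_m0 y : pin y m0 = v m0.
Proof. by rewrite /pin addrC subrK. Qed.

Lemma weighted_loss_pin c y : weighted_loss c (pin y) = weighted_loss c y.
Proof. exact: weighted_loss_shift. Qed.

Definition interp t y : rating R k := fun m => (1 - t) * v m + t * y m.

Lemma interp_pinned_sphere r y :
  0 < r -> y m0 = v m0 -> (exists m, r <= `|y m - v m|) ->
  exists t, [/\ 0 < t, t <= 1, interp t y m0 = v m0, sup_ball r (interp t y)
              & exists i, r <= `|interp t y i - v i|].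
Proof.
move=> r0 ym0 [m ym]; pose D i := `|y i - v i|.
case: (@arg_maxP _ R _ m xpredT D isT) => j _ imax.
have rD : r <= D j by apply: le_trans ym (imax m isT).
have D0 : 0 < D j by apply: lt_le_trans rD.
have interpE t l : interp t y l - v l = t * (y l - v l) by rewrite /interp; ring.
exists (r / D j); split.
- by rewrite divr_gt0.
- by rewrite ler_pdivrMr // mul1r.
- by rewrite /interp ym0; ring.
- move=> l; rewrite interpE normrM gtr0_norm ?divr_gt0 // -/(D l).
  by rewrite mulrAC ler_pdivrMr // ler_pM2l //; exact: imax.
- by exists j; rewrite interpE normrM gtr0_norm ?divr_gt0 // -/(D j) divfK ?gt_eqF.
Qed.

Variable wn : nat -> G -> R.
Hypothesis wn_ge0 : forall n g, 0 <= wn n g.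
Hypothesis wn_cvg : forall g, wn^~ g @ \oo --> w g.

Local Notation Fn n := (weighted_loss (wn n)).

Lemma weighted_loss_cvg_unif r eps : 0 <= r -> 0 < eps ->
  \forall n \near \oo, forall y, sup_ball r y -> `|Fn n y - Fw y| <= eps.
Proof.
move=> r0 e0; have [M hM] := vball_loss_bounded _ r0.
have M1 : 0 < `|M| + 1 by rewrite ltr_wpDl.
have close : \forall n \near \oo, forall g, `|w g - wn n g| < eps / (`|M| + 1).
  by apply: filter_forall => g; move/cvgrPdist_lt : (wn_cvg g); apply; rewrite divr_gt0.
apply: filterS close => n close y yb.
rewrite /weighted_loss -sumrB; apply: le_trans (ler_norm_sum _ _ _) _.
apply: le_trans (_ : \sum_g eps / (`|M| + 1) * f g y <= _).
  apply: ler_sum => g _; rewrite -mulrBl normrM (ger0_norm (f_ge0 g y)).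
  by rewrite ler_wpM2r // distrC ltW.
rewrite -mulr_sumr mulrAC ler_pdivrMr // ler_pM2l //.
apply: le_trans (_ : M <= _); last by rewrite ler_wpDr // real_ler_norm // num_real.
by under eq_bigr do rewrite -[f _ y]mul1r; exact: hM.
Qed.

Lemma empirical_far_gap r : 0 < r -> exists2 eta, 0 < eta & \forall n \near \oo, forall y,
  (exists m, r <= `|pin y m - v m|) -> Fn n v + eta <= Fn n y.
Proof.
move=> r0; have [d d0 margin] := opt_sphere_margin _ r0.
exists (d / 2); first by rewrite divr_gt0.
have d4 : 0 < d / 4 by rewrite divr_gt0.
apply: filterS (weighted_loss_cvg_unif _ _ (ltW r0) d4) => n unif y far.
rewrite -(weighted_loss_pin _ y).
have [t [t0 t1 zm0 zb zfar]] := interp_pinned_sphere _ _ r0 (pin_m0 y) far.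
have Fz := margin _ zm0 zb zfar.
have vb : sup_ball r v by move=> m; rewrite subrr normr0 ltW.
have := weighted_loss_convex _ v (pin y) _ (wn_ge0 n) (ltW t0) t1.
rewrite -/(interp t _) => conv.
have := unif _ zb; have := unif _ vb; rewrite !ler_norml => /andP[? ?] /andP[? ?].
have gap : d / 2 <= t * (Fn n (pin y) - Fn n v) by lra.
nra.
Qed.

Lemma empirical_lower_bound eps : 0 < eps ->
  \forall n \near \oo, forall y, Fn n v - eps <= Fn n y.
Proof.
move=> e0; have [eta eta0 far] := empirical_far_gap _ ltr01.
have e2 : 0 < eps / 2 by rewrite divr_gt0.
have unif := weighted_loss_cvg_unif _ _ ler01 e2.
near=> n.
have farn : forall y, (exists m, 1 <= `|pin y m - v m|) -> Fn n v + eta <= Fn n y.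
  by near: n; exact: far.
have unifn : forall y, sup_ball 1 y -> `|Fn n y - Fw y| <= eps / 2 by near: n; exact: unif.
move=> y; rewrite -(weighted_loss_pin _ y).
have [yfar|ynear] := pselect (exists m, 1 <= `|pin y m - v m|).
  by have := farn y yfar; rewrite -(weighted_loss_pin _ y); lra.
have yb : sup_ball 1 (pin y).
  by move=> m; rewrite leNgt; apply/negP => ym; apply: ynear; exists m; exact: ltW.
have vb : sup_ball 1 v by move=> m; rewrite subrr normr0.
have := opt_le (pin y); have := unifn _ yb; have := unifn _ vb.
by rewrite !ler_norml => /andP[? ?] /andP[? ?]; lra.
Unshelve. all: by end_near.
Qed.

Lemma near_minimizers_cvg (x : nat -> rating R k) :
  (forall eps, 0 < eps -> \forall n \near \oo, Fn n (x n) <= Fn n v + eps) ->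
  cvg_up_to_const x v.
Proof.
move=> xmin; exists (fun n => v m0 - x n m0) => m.
apply/cvgrPdist_lt => e e0; have [eta eta0 far] := empirical_far_gap _ e0.
have eta2 : 0 < eta / 2 by rewrite divr_gt0.
near=> n.
have farn : (exists m, e <= `|pin (x n) m - v m|) -> Fn n v + eta <= Fn n (x n).
  by near: n; apply: filterS far => n; apply.
have : Fn n (x n) <= Fn n v + eta / 2 by near: n; exact: xmin.
rewrite ltNge; apply: contraTN => xfar.
have : Fn n v + eta <= Fn n (x n) by apply: farn; exists m; rewrite distrC.
lra.
Unshelve. all: by end_near.
Qed.

End weighted_loss.

Lemma expR_le_quadratic {R : realType} (x : R) :
  `|x| <= 2^-1 -> expR x <= 1 + x + 2 * x ^+ 2.
Proof.
move=> x_small; have x_le : x <= 2^-1 by rewrite (le_trans (ler_norm x)).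
have : (1 - x) * expR x <= 1.
  have := ler_wpM2r (expR_ge0 x) (expR_ge1Dx (- x)).
  by rewrite expRN mulVf ?gt_eqF ?expR_gt0.
have : 0 <= x ^+ 2 * (1 - 2 * x) by rewrite mulr_ge0 ?sqr_ge0 //; lra.
have := expR_gt0 x; nra.
Qed.

Lemma geometric_nneseries_lty {R : realType} (rho : R) : 0 < rho -> rho < 1 ->
  (\sum_(n <oo) (rho ^+ n)%:E < +oo)%E.
Proof.
move=> rho0 rho1; apply: (@le_lt_trans _ _ ((1 - rho)^-1)%:E); last exact: ltry.
apply: lime_le.
  by apply: is_cvg_nneseries => n _ _; rewrite lee_fin exprn_ge0 // ltW.
apply: nearW => n; rewrite sumEFin lee_fin.
have rho_lt1 : `|rho| < 1 by rewrite gtr0_norm.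
have := @geometric_le_lim R n 1 rho ler01 rho0 rho_lt1.
by rewrite mul1r /series /geometric /=; under eq_bigr do rewrite mul1r.
Qed.

Lemma measure_bigsetU_le {d} {T : measurableType d} {R : realType}
    (mu : {measure set T -> \bar R}) {I : Type} (s : seq I) (Pr : pred I)
    (F : I -> set T) : (forall i, measurable (F i)) ->
  (mu (\big[setU/set0]_(i <- s | Pr i) F i) <= \sum_(i <- s | Pr i) mu (F i))%E.
Proof.
move=> mF; elim: s => [|a s IH]; first by rewrite !big_nil measure0.
rewrite !big_cons; case: (Pr a) => //.
apply: le_trans (measureU2 _ _ _) _ => //; last exact: leeD.
by apply: bigsetU_measurable => i _.
Qed.

Section iid_frequencies.
Context {R : realType} {d : measure_display} {Omega : measurableType d}.
Context {P : probability Omega R} {V : finType} {X : nat -> Omega -> V} {p : V -> R}.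
Hypothesis X_iid : iid_seq P X p.

Definition cylinder n (vv : 'I_n -> V) : set Omega :=
  \bigcap_(i in [set j : 'I_n | True]) (X i @^-1` [set vv i]).

Lemma measurable_X i a : measurable (X i @^-1` [set a]).
Proof. exact: X_iid.1. Qed.

Lemma measurable_cylinder n vv : measurable (cylinder n vv).
Proof.
by apply: fin_bigcap_measurable => [|i _]; [exact: finite_finset | exact: measurable_X].
Qed.

Lemma P_cylinder n vv : P (cylinder n vv) = (\prod_(i < n) p (vv i))%:E.
Proof. exact: X_iid.2. Qed.

Lemma P_X0 a : P (X 0 @^-1` [set a]) = (p a)%:E.
Proof.
have := @P_cylinder 1 (fun=> a); rewrite big_ord1 => <-.
congr (P _); apply/seteqP; split=> [w wa i _ | w /(_ ord0 I) //].
by rewrite (ord1 i).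
Qed.

Lemma law_ge0 a : 0 <= p a.
Proof. by rewrite -lee_fin -P_X0 measure_ge0. Qed.

Lemma law_sum1 : \sum_a p a = 1.
Proof.
have partition : [set: Omega] = \bigcup_(a in [set: V]) X 0 @^-1` [set a].
  by apply/seteqP; split=> // w _; exists (X 0 w).
have := probability_setT P; rewrite partition measure_fin_bigcup //.
- rewrite (fsbigE (index_enum V)) ?index_enum_uniq //.
  under eq_bigl do rewrite in_setT.
  rewrite (eq_bigr (fun a => (p a)%:E)) => [|a _]; last exact: P_X0.
  by rewrite sumEFin => -[].
- by move=> a _; rewrite mem_index_enum.
- exact: finite_finset.
- by move=> a b _ _ [w [/= -> ->]].
- by move=> a _; exact: measurable_X.
Qed.

Lemma law_le1 a : p a <= 1.
Proof.
by rewrite -law_sum1 (bigD1 a) //= lerDl sumr_ge0 // => b _; exact: law_ge0.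
Qed.

Lemma chernoff_mass n (Y : V -> R) lam t : 0 <= lam ->
  \sum_(vv : {ffun 'I_n -> V} | t <= \sum_(i < n) Y (vv i)) \prod_(i < n) p (vv i)
  <= expR (- (lam * t)) * (\sum_a p a * expR (lam * Y a)) ^+ n.
Proof.
move=> lam0.
have mass_ge0 (vv : {ffun 'I_n -> V}) : 0 <= \prod_(i < n) p (vv i).
  by apply: prodr_ge0 => i _; exact: law_ge0.
apply: le_trans (_ : \sum_(vv : {ffun 'I_n -> V})
   (\prod_(i < n) p (vv i)) * expR (lam * (\sum_(i < n) Y (vv i) - t)) <= _).
  rewrite [leRHS](bigID (fun vv : {ffun 'I_n -> V} => t <= \sum_(i < n) Y (vv i))) /=.
  rewrite ler_wpDr ?sumr_ge0 // => [vv _|]; first by rewrite mulr_ge0 ?expR_ge0.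
  apply: ler_sum => vv tY; rewrite ler_peMr // -expR0 ler_expR.
  by rewrite mulr_ge0 // subr_ge0.
have -> : (\sum_a p a * expR (lam * Y a)) ^+ n =
    \prod_(i < n) \sum_a p a * expR (lam * Y a) by rewrite prodr_const card_ord.
rewrite bigA_distr_bigA /= mulr_sumr.
rewrite le_eqVlt; apply/predU1P; left; apply: eq_bigr => vv _.
by rewrite big_split /= mulrBr mulr_sumr expRD expR_sum expRN; ring.
Qed.

Lemma centered_mgf_le (Y : V -> R) lam : \sum_a p a * Y a = 0 ->
  (forall a, `|Y a| <= 1) -> 0 <= lam -> lam <= 2^-1 ->
  \sum_a p a * expR (lam * Y a) <= expR (2 * lam ^+ 2).
Proof.
move=> Y_centered Y_le1 lam0 lam_le.
apply: le_trans (_ : \sum_a p a * (1 + lam * Y a + 2 * lam ^+ 2) <= _).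
  apply: ler_sum => a _; rewrite ler_wpM2l ?law_ge0 //.
  have lamY : `|lam * Y a| <= 2^-1.
    by rewrite normrM ger0_norm //; apply: le_trans lam_le; rewrite ler_piMr.
  apply: le_trans (expR_le_quadratic _ lamY) _.
  rewrite lerD2l exprMn ler_wpM2l // ler_piMr ?sqr_ge0 //.
  by move: (Y_le1 a); rewrite ler_norml => /andP[? ?]; nra.
rewrite (eq_bigr (fun a => p a + lam * (p a * Y a) + 2 * lam ^+ 2 * p a)) => [|a _];
  last by ring.
rewrite !big_split /= -!mulr_sumr Y_centered law_sum1 mulr0 addr0 mulr1.
exact: expR_ge1Dx.
Qed.

(* The event [n eps <= \sum_(i < n) Y (X i w)] as a finite union of cylinders,
   so that [iid_seq] computes its probability. *)
Definition large_sum_event (Y : V -> R) (eps : R) n : set Omega :=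
  \big[setU/set0]_(vv : {ffun 'I_n -> V} | n%:R * eps <= \sum_(i < n) Y (vv i))
    cylinder n vv.

Lemma measurable_large_sum_event Y eps n : measurable (large_sum_event Y eps n).
Proof. by apply: bigsetU_measurable => vv _; exact: measurable_cylinder. Qed.

Lemma P_large_sum_event_le Y eps n : \sum_a p a * Y a = 0 ->
  (forall a, `|Y a| <= 1) -> 0 < eps -> eps <= 2 ->
  (P (large_sum_event Y eps n) <= (expR (- (eps ^+ 2 / 8)) ^+ n)%:E)%E.
Proof.
move=> Y_centered Y_le1 eps0 eps2.
move: (measure_bigsetU_le P (index_enum {ffun 'I_n -> V})
  (fun vv => n%:R * eps <= \sum_(i < n) Y (vv i)) _ (measurable_cylinder n)).
move/le_trans; apply.
rewrite (eq_bigr (fun vv : {ffun _ -> V} => (\prod_(i < n) p (vv i))%:E)) => [|vv _];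
  last exact: P_cylinder.
rewrite sumEFin lee_fin.
(* The Chernoff parameter eps / 4 minimizes 2 lam^2 - lam eps, with value - eps^2 / 8. *)
have lam0 : 0 <= eps / 4 by rewrite divr_ge0 // ltW.
apply: le_trans (chernoff_mass n Y _ (n%:R * eps) lam0) _.
apply: le_trans (_ : expR (- (eps / 4 * (n%:R * eps))) *
                     expR (2 * (eps / 4) ^+ 2) ^+ n <= _).
  rewrite ler_pM2l ?expR_gt0 // lerXn2r // ?nnegrE ?expR_ge0 //.
    by rewrite sumr_ge0 // => a _; rewrite mulr_ge0 ?law_ge0 ?expR_ge0.
  by apply: centered_mgf_le => //; lra.
by rewrite -!expRM_natl -expRD le_eqVlt; apply/predU1P; left; congr expR; field.
Qed.

Lemma not_large_sum_event Y eps n w : ~ large_sum_event Y eps n w ->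
  \sum_(i < n) Y (X i w) < n%:R * eps.
Proof.
move=> notE; rewrite ltNge; apply/negP => large; apply: notE.
rewrite /large_sum_event (bigD1 [ffun i : 'I_n => X i w]) /=; last first.
  by under eq_bigr do rewrite ffunE.
by left => i _ /=; rewrite ffunE.
Qed.

Lemma ae_eventually_sum_lt Y eps : \sum_a p a * Y a = 0 ->
  (forall a, `|Y a| <= 1) -> 0 < eps -> eps <= 2 ->
  {ae P, forall w, \forall n \near \oo, \sum_(i < n) Y (X i w) < n%:R * eps}.
Proof.
move=> Y_centered Y_le1 eps0 eps2; set rho := expR (- (eps ^+ 2 / 8)).
have rho1 : rho < 1 by rewrite -expR0 ltr_expR oppr_lt0 divr_gt0 // exprn_gt0.
exists (lim_sup_set (large_sum_event Y eps)); split.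
- apply: bigcapT_measurable => n; apply: bigcup_measurable => j _.
  exact: measurable_large_sum_event.
- apply: lim_sup_set_cvg0 => [n|]; first exact: measurable_large_sum_event.
  apply: le_lt_trans (geometric_nneseries_lty _ (expR_gt0 _) rho1).
  apply: lee_nneseries => [n _ _|n _]; first exact: measure_ge0.
  exact: P_large_sum_event_le.
- move=> w /= notev N _; apply: contrapT => infinitely_often; apply: notev.
  exists N => // j /= Nj; apply: not_large_sum_event => Ej.
  by apply: infinitely_often; exists j.
Qed.

Lemma ae_mean_cvg0 (Y : V -> R) : \sum_a p a * Y a = 0 -> (forall a, `|Y a| <= 1) ->
  {ae P, forall w, (fun n => (\sum_(i < n) Y (X i w)) / n%:R) @ \oo --> 0}.
Proof.
move=> Y_centered Y_le1.
have NY_centered : \sum_a p a * - Y a = 0.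
  by under eq_bigr do rewrite mulrN; rewrite sumrN Y_centered oppr0.
have NY_le1 a : `|- Y a| <= 1 by rewrite normrN.
have inv_gt0 j : 0 < (j.+1%:R : R)^-1 by rewrite invr_gt0.
have inv_le2 j : (j.+1%:R : R)^-1 <= 2.
  by rewrite (le_trans _ (ler1n _ 2)) // invf_le1 // ler1n.
have bounds j : {ae P, forall w,
    (\forall n \near \oo, \sum_(i < n) Y (X i w) < n%:R * j.+1%:R^-1) /\
    (\forall n \near \oo, \sum_(i < n) - Y (X i w) < n%:R * j.+1%:R^-1)}.
  apply: filterS2 (ae_eventually_sum_lt _ _ Y_centered Y_le1 (inv_gt0 j) (inv_le2 j))
    (ae_eventually_sum_lt _ _ NY_centered NY_le1 (inv_gt0 j) (inv_le2 j)) => w.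
  by split.
apply: filterS (ae_foralln bounds) => w wbounds.
apply/cvgrPdist_lt => e e0; have [N _ N_lt] := near_infty_natSinv_lt (PosNum e0).
have [upper lower] := wbounds N.
near=> n.
have n_gt0 : (0 < n%:R :> R) by rewrite ltr0n; near: n; exists 1%N.
have : \sum_(i < n) Y (X i w) < n%:R * N.+1%:R^-1 by near: n; exact: upper.
have : \sum_(i < n) - Y (X i w) < n%:R * N.+1%:R^-1 by near: n; exact: lower.
rewrite sumrN sub0r normrN normrM normfV (gtr0_norm n_gt0) ltr_pdivrMr // => lo up.
apply: lt_le_trans (_ : n%:R * N.+1%:R^-1 <= _).
  by rewrite ltr_norml -ltrNl lo up.
by rewrite mulrC ler_pM2r // ltW // N_lt /=.
Unshelve. all: by end_near.
Qed.

Lemma ae_frequency_cvg : {ae P, forall w, forall a,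
  (fun n => (\sum_(i < n) ((X i w == a)%:R : R)) / n%:R) @ \oo --> p a}.
Proof.
apply: filter_forall => a; pose Y b := ((b == a)%:R : R) - p a.
have Y_centered : \sum_b p b * Y b = 0.
  rewrite (eq_bigr (fun b => p b * (b == a)%:R - p a * p b)) => [|b _];
    last by rewrite /Y; ring.
  rewrite sumrB -mulr_sumr law_sum1 mulr1 (bigD1 a) //= eqxx mulr1 big1 ?addr0 ?subrr //.
  by move=> b /negbTE ->; rewrite mulr0.
have Y_le1 b : `|Y b| <= 1.
  by have := law_ge0 a; have := law_le1 a; rewrite ler_norml /Y; case: (b == a) => /=; lra.
apply: filterS (ae_mean_cvg0 _ Y_centered Y_le1) => w.
move/(cvgD (cvg_cst (p a))); rewrite addr0; apply: cvg_trans; apply: near_eq_cvg.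
near=> n; have n0 : (n%:R : R) != 0 by rewrite pnatr_eq0 -lt0n; near: n; exists 1%N.
by rewrite fctE /Y sumrB sumr_const card_ord -mulr_natr; field.
Unshelve. all: by end_near.
Qed.

End iid_frequencies.

Lemma eventually_le_of_sum_le {R : realType} {a b : nat -> R} {C : R} :
  (\forall n \near \oo, a n + b n <= C / n%:R) ->
  (forall e, 0 < e -> \forall n \near \oo, - e <= b n) ->
  forall e, 0 < e -> \forall n \near \oo, a n <= e.
Proof.
move=> sum_le b_ge e e0; have e2 : 0 < e / 2 by rewrite divr_gt0.
near=> n.
have n_gt0 : (0 < n%:R :> R) by rewrite ltr0n; near: n; exact: nbhs_infty_gt.
have : C / n%:R < e / 2.
  rewrite ltr_pdivrMr // mulrC -ltr_pdivrMr // mulrC; near: n; exact: nbhs_infty_gtr.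
have : a n + b n <= C / n%:R by near: n.
have : - (e / 2) <= b n by near: n; exact: b_ge.
lra.
Unshelve. all: by end_near.
Qed.

Section sample.
Context {R : realType} {k : nat} {Omega : Type}.
Variables (X : nat -> Omega -> game k * bool) (w : Omega).

Definition sample b n : seq (game k) := [seq (X i w).1 | i <- iota 0 n & (X i w).2 == b].

Lemma D_task_sample n : D_task X n w = sample true n.
Proof. by congr map; apply: eq_filter => i; rewrite eqb_id. Qed.

Lemma D_ntask_sample n : D_ntask X n w = sample false n.
Proof. by congr map; apply: eq_filter => i; rewrite eqbF_neg. Qed.

Definition occurrences n a : R := \sum_(i < n) (X i w == a)%:R.

Definition frequency b n (g : game k) : R := occurrences n (g, b) / n%:R.

Lemma frequency_ge0 b n g : 0 <= frequency b n g.
Proof. by rewrite divr_ge0 // sumr_ge0. Qed.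

Lemma sum_sample_occurrences (c : pred (game k * bool)) n (F : game k * bool -> R) :
  \sum_(i <- iota 0 n | c (X i w)) F (X i w) = \sum_(a | c a) occurrences n a * F a.
Proof.
under [RHS]eq_bigr do rewrite mulr_suml.
have -> : iota 0 n = index_iota 0 n by rewrite /index_iota subn0.
rewrite exchange_big /= big_mkcond big_mkord; apply: eq_bigr => i _.
case: ifP => cX; last first.
  by rewrite big1 // => a ca; case: eqP => [Xa|_]; [rewrite Xa ca in cX | rewrite mul0r].
rewrite (bigD1 (X i w)) //= eqxx mul1r big1 ?addr0 // => a /andP[_ aX].
by rewrite eq_sym (negbTE aX) mul0r.
Qed.

Lemma sum_label b (F : game k * bool -> R) :
  \sum_(a | a.2 == b) F a = \sum_g F (g, b).
Proof.
rewrite big_mkcond (eq_bigr (fun g => \sum_(c : bool) if c == b then F (g, c) else 0)).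
  by rewrite pair_bigA; apply: eq_bigr => -[].
by move=> g _; rewrite big_bool; case: b => /=; rewrite ?addr0 ?add0r.
Qed.

Lemma loss_sample b n y : (0 < n)%N ->
  loss (sample b n) y = n%:R * weighted_loss (@game_loss R k) (frequency b n) y.
Proof.
move=> n_gt0; rewrite /loss big_map big_filter.
rewrite (sum_sample_occurrences (fun a => a.2 == b) n (fun a => game_loss a.1 y)) sum_label.
rewrite mulr_sumr; apply: eq_bigr => g _; rewrite /frequency mulrA mulrCA mulfV ?mulr1 //.
by rewrite pnatr_eq0 -lt0n.
Qed.

End sample.

Section label.
Context {R : realType} {k : nat} {Omega : Type}.
Context {X : nat -> Omega -> game k * bool} {w : Omega} {p : game k * bool -> R}.
Hypothesis frequency_cvg : forall a, (fun n => occurrences X w n a / n%:R) @ \oo --> p a.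
Context {b : bool} {v : rating R k}.
Hypothesis mass_gt0 : 0 < \sum_g p (g, b).
Hypothesis v_opt : optimal_up_to_const (exp_loss p b) v.

Local Notation Fb n := (weighted_loss (@game_loss R k) (frequency X w b n)).

Lemma mass_gt0_models : (0 < k)%N.
Proof.
case: (pickP (fun _ : game k => true)) => [g _|none].
  exact: leq_ltn_trans (leq0n _) (ltn_ord (gma g)).
by move: mass_gt0; rewrite big_pred0 ?ltxx.
Qed.

Lemma weighted_loss_mass y :
  weighted_loss (@game_loss R k) (fun g => p (g, b)) y = (\sum_h p (h, b)) * exp_loss p b y.
Proof.
rewrite /exp_loss mulr_sumr; apply: eq_bigr => g _.
by rewrite mulrA mulrCA mulfV ?mulr1 // gt_eqF.
Qed.

Lemma weighted_loss_mass_opt :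
  optimal_up_to_const (weighted_loss (@game_loss R k) (fun g => p (g, b))) v.
Proof.
move=> y; rewrite -v_opt.
by split=> ymin z; have := ymin z; rewrite !weighted_loss_mass ler_pM2l.
Qed.

Lemma label_lower_bound eps : 0 < eps ->
  \forall n \near \oo, forall y, Fb n v - eps <= Fb n y.
Proof.
exact: (empirical_lower_bound _ game_loss_ge0 game_loss_shift game_loss_convex
  game_loss_continuous _ _ (Ordinal mass_gt0_models) weighted_loss_mass_opt _
  (frequency_ge0 X w b) (fun g => frequency_cvg (g, b))).
Qed.

Lemma label_near_minimizers_cvg (x : nat -> rating R k) :
  (forall eps, 0 < eps -> \forall n \near \oo, Fb n (x n) <= Fb n v + eps) ->
  cvg_up_to_const x v.
Proof.
exact: (near_minimizers_cvg _ game_loss_ge0 game_loss_shift game_loss_convex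
  game_loss_continuous _ _ (Ordinal mass_gt0_models) weighted_loss_mass_opt _
  (frequency_ge0 X w b) (fun g => frequency_cvg (g, b))).
Qed.

Lemma label_minimizers_cvg (x : nat -> rating R k) :
  (\forall n \near \oo, is_minimizer (loss (sample X w b n)) (x n)) ->
  cvg_up_to_const x v.
Proof.
move=> xmin; apply: label_near_minimizers_cvg => eps e0; near=> n.
have n_gt0 : (0 < n)%N by near: n; exact: nbhs_infty_gt.
have : is_minimizer (loss (sample X w b n)) (x n) by near: n.
move=> /(_ v); rewrite !loss_sample // ler_pM2l ?ltr0n //; lra.
Unshelve. all: by end_near.
Qed.

End label.

Section polyrating.
Context {R : realType} {k : nat} {Omega : Type}.
Context {X : nat -> Omega -> game k * bool} {w : Omega} {p : game k * bool -> R}.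
Hypothesis frequency_cvg : forall a, (fun n => occurrences X w n a / n%:R) @ \oo --> p a.
Context {sn s1 : R} {Rt Rn : rating R k}.
Hypotheses (mass_t : 0 < \sum_g p (g, true)) (mass_n : 0 < \sum_g p (g, false)).
Hypotheses (opt_t : optimal_up_to_const (exp_loss p true) Rt)
           (opt_n : optimal_up_to_const (exp_loss p false) Rn).

Local Notation Fb b n := (weighted_loss (@game_loss R k) (frequency X w b n)).

Definition prior (x : rating R k * rating R k) : R :=
  \sum_(m < k) (x.1 m) ^+ 2 / (2 * sn ^+ 2) + \sum_(m < k) (x.2 m) ^+ 2 / (2 * s1 ^+ 2).

Lemma prior_ge0 x : 0 <= prior x.
Proof.
by rewrite addr_ge0 // sumr_ge0 // => m _; rewrite divr_ge0 ?sqr_ge0 // mulr_ge0 ?sqr_ge0.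
Qed.

Lemma polyrating_excess n (x : rating R k * rating R k) : (0 < n)%N ->
  is_minimizer (polyrating_obj sn s1 (D_ntask X n w) (D_task X n w)) x ->
  (Fb false n x.1 - Fb false n Rn) + (Fb true n (fun m => x.1 m + x.2 m) - Fb true n Rt)
  <= prior (Rn, fun m => Rt m - Rn m) / n%:R.
Proof.
move=> n_gt0 /(_ (Rn, fun m => Rt m - Rn m)).
rewrite /polyrating_obj -!addrA -/(prior x) -/(prior (Rn, _)) /=.
rewrite (_ : (fun m => Rn m + (Rt m - Rn m)) = Rt);
  last by apply/funext => m; rewrite addrC subrK.
rewrite D_task_sample D_ntask_sample !loss_sample // => xmin.
have := prior_ge0 x; have n0 : (0 < n%:R :> R) by rewrite ltr0n.
rewrite ler_pdivlMr //; nra.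
Qed.

Lemma polyrating_cvg (Rp : nat -> rating R k * rating R k) :
  (\forall n \near \oo,
     is_minimizer (polyrating_obj sn s1 (D_ntask X n w) (D_task X n w)) (Rp n)) ->
  cvg_up_to_const (fun n m => (Rp n).1 m + (Rp n).2 m) Rt /\
  cvg_up_to_const (fun n => (Rp n).1) Rn.
Proof.
move=> Rp_min; set Rpt := fun n m => (Rp n).1 m + (Rp n).2 m.
pose excess_t n := Fb true n (Rpt n) - Fb true n Rt.
pose excess_n n := Fb false n (Rp n).1 - Fb false n Rn.
have excess_le : \forall n \near \oo,
    excess_n n + excess_t n <= prior (Rn, fun m => Rt m - Rn m) / n%:R.
  by apply: filterS2 (nbhs_infty_gt 0) Rp_min => n; exact: polyrating_excess.
have excess_t_ge e : 0 < e -> \forall n \near \oo, - e <= excess_t n.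
  move=> e0; apply: filterS (label_lower_bound frequency_cvg mass_t opt_t _ e0) => n.
  by move=> /(_ (Rpt n)); rewrite /excess_t; lra.
have excess_n_ge e : 0 < e -> \forall n \near \oo, - e <= excess_n n.
  move=> e0; apply: filterS (label_lower_bound frequency_cvg mass_n opt_n _ e0) => n.
  by move=> /(_ (Rp n).1); rewrite /excess_n; lra.
split.
- apply: (label_near_minimizers_cvg frequency_cvg mass_t opt_t) => eps e0.
  have excess_le' : \forall n \near \oo,
      excess_t n + excess_n n <= prior (Rn, fun m => Rt m - Rn m) / n%:R.
    by apply: filterS excess_le => n; rewrite addrC.
  apply: filterS (eventually_le_of_sum_le excess_le' excess_n_ge _ e0) => n.
  by rewrite /excess_t; lra.
- apply: (label_near_minimizers_cvg frequency_cvg mass_n opt_n) => eps e0.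
  apply: filterS (eventually_le_of_sum_le excess_le excess_t_ge _ e0) => n.
  by rewrite /excess_n; lra.
Qed.

End polyrating.

Theorem mainTheorem3 (R : realType) (k : nat) (d : measure_display)
  (Omega : measurableType d) (P : probability Omega R)
  (X : nat -> Omega -> game k * bool) (p : game k * bool -> R)
  (sn s1 : R) (Rstar_task Rstar_ntask : rating R k) :
  iid_seq P X p ->
  0 < \sum_(g : game k) p (g, true) ->
  0 < \sum_(g : game k) p (g, false) ->
  0 < sn -> 0 < s1 ->
  optimal_up_to_const (exp_loss p true) Rstar_task ->
  optimal_up_to_const (exp_loss p false) Rstar_ntask ->
  {ae P, forall w : Omega,
    (forall Rt : nat -> rating R k,
       (\forall n \near \oo, is_minimizer (loss (D_task X n w)) (Rt n)) ->
       cvg_up_to_const Rt Rstar_task) /\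
    (forall Rn : nat -> rating R k,
       (\forall n \near \oo, is_minimizer (loss (D_ntask X n w)) (Rn n)) ->
       cvg_up_to_const Rn Rstar_ntask) /\
    (forall Rp : nat -> rating R k * rating R k,
       (\forall n \near \oo,
          is_minimizer (polyrating_obj sn s1 (D_ntask X n w) (D_task X n w)) (Rp n)) ->
       cvg_up_to_const (fun n m => (Rp n).1 m + (Rp n).2 m) Rstar_task /\
       cvg_up_to_const (fun n => (Rp n).1) Rstar_ntask)}.
Proof.
(* The sign of [sn] and [s1] is irrelevant: the prior term is nonnegative anyway. *)
move=> X_iid mass_t mass_n _ _ opt_t opt_n.
apply: filterS (ae_frequency_cvg X_iid) => w frequency_cvg.
split; [|split].
- move=> Rt Rt_min; apply: (label_minimizers_cvg frequency_cvg mass_t opt_t).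
  by apply: filterS Rt_min => n; rewrite D_task_sample.
- move=> Rn Rn_min; apply: (label_minimizers_cvg frequency_cvg mass_n opt_n).
  by apply: filterS Rn_min => n; rewrite D_ntask_sample.
- exact: (polyrating_cvg frequency_cvg mass_t mass_n opt_t opt_n).
Qed.
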